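(* Let $M,N,Q$ be positive integers with $N\le M$, let $S=\{\vec b\in\mathbb{F}_2^M: H(\vec b)=N\}$, and let $\mathbf{G}\in\mathbb{F}_2^{Q\times M}$ be such that $\vec b\mapsto\mathbf{G}\vec b$ is injective on $S$. Let $\hat H=\sum_{i,j=1}^M h_{ij}\hat a_i^\dagger\hat a_j+\sum_{i,j,k,l=1}^M g_{ijkl}\hat a_i^\dagger\hat a_j^\dagger\hat a_k\hat a_l$ be a Hermitian operator with real coefficients $h_{ij},g_{ijkl}$, and let $\mathcal{E}(\hat H)=\sum_{\vec b,\vec b'\in S}\langle\vec b'|\hat H|\vec b\rangle\,|\mathbf{G}\vec b'\rangle\langle\mathbf{G}\vec b|$, an operator on $(\mathbb{C}^2)^{\otimes Q}$. Then $\mathcal{E}(\hat H)=\sum_{t=1}^{K}\hat H_t$, where each $\hat H_t$ is a linear combination of pairwise commuting Pauli strings (elements of $\{I,X,Y,Z\}^{\otimes Q}$), and the number $K$ of such groups satisfies $K=\mathcal{O}(M^4)$, i.e. $K\le cM^4$ for an absolute constant $c$ independent of $N,Q,\mathbf{G},h,g$.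
   Context: Fermionic operators are in the Jordan–Wigner representation on the Fock basis $\{|\vec b\rangle:\vec b\in\mathbb{F}_2^M\}$: $\hat a_j|\vec b\rangle=(-1)^{\sum_{m<j}\vec b[m]}|\vec b\oplus\vec e_j\rangle$ if $\vec b[j]=1$ and $\hat a_j|\vec b\rangle=0$ otherwise, and $\hat a_j^\dagger$ is its adjoint; $\vec e_j$ is the $j$-th unit vector. $H(\vec b)$ is Hamming weight. Such a Hamiltonian preserves the span of $\{|\vec b\rangle:\vec b\in S\}$. A set of pairwise commuting Pauli strings can be simultaneously diagonalised by a single Clifford unitary, so each group $\hat H_t$ corresponds to one Clifford measurement basis; the theorem bounds the number of Clifford measurement bases needed to estimate $\langle\mathcal{E}(\hat H)\rangle$. *)

(* Operators on finite-dimensional Hilbert spaces with a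
   distinguished computational basis indexed by a finite type T are
   represented by their matrix entries  A x y = <x|A|y>. *)
From HB Require Import structures.
From mathcomp Require Import all_boot all_order all_algebra.
Set Implicit Arguments. Unset Strict Implicit. Unset Printing Implicit Defensive.
Import Order.TTheory GRing.Theory Num.Theory.
Local Open Scope ring_scope.

Section Ops.
Variable C : numClosedFieldType.

Definition op (T : finType) := T -> T -> C.

Definition opmul (T : finType) (A B : op T) : op T :=
  fun x y => \sum_(z : T) A x z * B z y.

Definition adj (T : finType) (A : op T) : op T := fun x y => (A y x)^*.

Definition herm_op (T : finType) (A : op T) : Prop := forall x y, adj A x y = A x y.

Definition fock (M : nat) := 'cV['F_2]_M.

Definition hw (M : nat) (b : fock M) : nat := #|[set m : 'I_M | b m 0 == 1]|.

Definition Sfix (M N : nat) : {set fock M} := [set b : fock M | hw b == N].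

(* Jordan-Wigner annihilation operator a_j:
   a_j |b> = (-1)^(sum_{m<j} b[m]) |b + e_j>  if b[j] = 1, and 0 otherwise. *)
Definition ann (M : nat) (j : 'I_M) : op (fock M) :=
  fun b' b =>
    if b j 0 == 1 then
      (-1) ^+ #|[set m : 'I_M | (m < j)%N && (b m 0 == 1)]|
        * (b' == b + delta_mx j 0)%:R
    else 0.

Definition cre (M : nat) (j : 'I_M) : op (fock M) := adj (ann j).

Definition Hop (M : nat) (h : 'I_M -> 'I_M -> C)
    (g : 'I_M -> 'I_M -> 'I_M -> 'I_M -> C) : op (fock M) :=
  fun x y =>
    \sum_(i : 'I_M) \sum_(j : 'I_M) h i j * opmul (cre i) (ann j) x y
  + \sum_(i : 'I_M) \sum_(j : 'I_M) \sum_(k : 'I_M) \sum_(l : 'I_M)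
       g i j k l * opmul (opmul (cre i) (cre j)) (opmul (ann k) (ann l)) x y.

Definition qubits (Q : nat) := 'cV['F_2]_Q.

Definition encode (M N Q : nat) (G : 'M['F_2]_(Q, M)) (A : op (fock M))
    : op (qubits Q) :=
  fun x y =>
    \sum_(b in Sfix M N) \sum_(b' in Sfix M N)
       A b' b * ((x == G *m b') && (y == G *m b))%:R.

Inductive pauli := PI | PX | PY | PZ.

Definition sigma (p : pauli) (u v : 'F_2) : C :=
  match p with
  | PI => (u == v)%:R
  | PX => (u != v)%:R
  | PY => if (u == 0) && (v == 1) then - 'i
          else if (u == 1) && (v == 0) then 'i else 0
  | PZ => (u == v)%:R * (if u == 0 then 1 else -1)
  end.

Definition pstring (Q : nat) := 'I_Q -> pauli.

Definition pauli_op (Q : nat) (P : pstring Q) : op (qubits Q) :=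
  fun x y => \prod_(q : 'I_Q) sigma (P q) (x q 0) (y q 0).

End Ops.

From HB Require Import structures.
From mathcomp Require Import all_boot all_order all_algebra ring zify.
From Stdlib Require Import FunctionalExtensionality.
Set Implicit Arguments. Unset Strict Implicit. Unset Printing Implicit Defensive.
Import Order.TTheory GRing.Theory Num.Theory.
Local Open Scope ring_scope.

(* Each one- or two-body term of H sends a Fock state b only to b + u for a
   fixed u in F_2^M (the sum of the unit vectors of its modes), so its encoding
   sends a qubit state y only to y + Gu.  An operator A with this shift
   property for v is diagonal up to X^v, and Fourier analysis of its diagonal
   x |-> <x|A|x+v> over the characters (-1)^(w.x) writes it as a combination
   of the 2^Q strings Z^w X^v.  Two such strings with the same v commute iff
   w.v = w'.v, so splitting by this parity gives two commuting groups per
   term, i.e. 2 (M^2 + M^4) <= 4 M^4 groups. *)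

Lemma F2_cases (a : 'F_2) : a = 0 \/ a = 1.
Proof. by case: a => [[|[|]] //= ?]; [left | right]; apply: val_inj. Qed.

Section F2Vectors.
Variable n : nat.
Implicit Types x y u v w : 'cV['F_2]_n.

Lemma opprF2 x : - x = x.
Proof. by apply/matrixP => i j; rewrite mxE oppr_pchar2 // pchar_Fp. Qed.

Lemma addrrF2 x : x + x = 0.
Proof. by rewrite -[X in X + x]opprF2 addNr. Qed.

Lemma eq_addF2C x y u : (x == y + u) = (y == x + u).
Proof. by rewrite -subr_eq opprF2 eq_sym. Qed.

Lemma eq_addF2A x y u u' : (x + u == y + u') = (x + u' == y + u).
Proof. by rewrite -[LHS]subr_eq -[RHS]subr_eq !opprF2 addrAC. Qed.

Lemma col_neqP x y : x != y -> exists q, x q 0 != y q 0.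
Proof.
move=> neq_xy; apply/existsP; apply: contraR neq_xy => /existsPn eq_xy.
by apply/eqP/matrixP => i j; rewrite (ord1 j); exact/eqP/negbNE/eq_xy.
Qed.

Definition dotF2 w x : 'F_2 := (w^T *m x) 0 0.

Lemma dotF2E w x : dotF2 w x = \sum_q w q 0 * x q 0.
Proof. by rewrite /dotF2 mxE; apply: eq_bigr => q _; rewrite mxE. Qed.

Lemma dotF2C w x : dotF2 w x = dotF2 x w.
Proof. by rewrite !dotF2E; apply: eq_bigr => q _; rewrite mulrC. Qed.

Lemma dotF2Dr w x y : dotF2 w (x + y) = dotF2 w x + dotF2 w y.
Proof. by rewrite /dotF2 mulmxDr mxE. Qed.

Lemma dotF2Dl w w' x : dotF2 (w + w') x = dotF2 w x + dotF2 w' x.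
Proof. by rewrite dotF2C dotF2Dr !(dotF2C x). Qed.

Lemma dotF20 w : dotF2 w 0 = 0.
Proof. by rewrite /dotF2 mulmx0 mxE. Qed.

End F2Vectors.

Section Characters.
Variable C : numClosedFieldType.

Definition chi (a : 'F_2) : C := if a == 1 then -1 else 1.

Lemma chi0 : chi 0 = 1. Proof. by []. Qed.

Lemma chiD a b : chi (a + b) = chi a * chi b.
Proof.
by case: (F2_cases a) => ->; case: (F2_cases b) => ->;
  rewrite ?addr0 ?add0r /chi /= ?mulr1 ?mul1r // mulrNN mulr1.
Qed.

Variable Q : nat.
Implicit Types x y u v w : qubits Q.

Lemma card_qubits : #|{: qubits Q}| = (2 ^ Q)%N.
Proof. by rewrite card_mx card_ord muln1. Qed.

Lemma chi_dotE w x : chi (dotF2 w x) = \prod_q chi (w q 0 * x q 0).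
Proof. by rewrite dotF2E (big_morph chi chiD chi0). Qed.

Lemma sum_chi_dot u : \sum_w chi (dotF2 w u) = (u == 0)%:R * (2 ^ Q)%:R.
Proof.
have [->|u_neq0] := eqVneq u 0.
  by under eq_bigr do rewrite dotF20; rewrite sumr_const card_qubits mul1r.
have [q uq1] : exists q, u q 0 = 1.
  have [q uq] := col_neqP u_neq0; rewrite mxE in uq.
  by exists q; case: (F2_cases (u q 0)) uq => ->.
(* translating w by the unit vector e_q flips the sign of every summand *)
pose e : qubits Q := delta_mx q 0.
have chi_e : chi (dotF2 e u) = -1.
  by rewrite dotF2E (bigD1 q) //= big1 ?addr0 => [|i /negbTE iq];
    rewrite mxE ?eqxx ?iq ?mul0r // mul1r uq1.
set S := \sum_w _; have S_opp : S = - S.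
  rewrite {1}/S (reindex_inj (addIr e)) /= -sumrN.
  by apply: eq_bigr => w _; rewrite dotF2Dl chiD chi_e mulrN1.
have : S *+ 2 == 0 by rewrite mulr2n {1}S_opp addNr.
by rewrite mulrn_eq0 /= mul0r => /eqP.
Qed.

End Characters.

Section PauliStrings.
Variables (C : numClosedFieldType) (Q : nat).
Implicit Types x y z u v w : qubits Q.

(* [zx_pauli a b] is Z^b X^a up to the phase [zx_phase1 a b]: Y = -i Z X. *)
Definition zx_pauli (a b : 'F_2) : pauli :=
  if a == 1 then (if b == 1 then PY else PX) else (if b == 1 then PZ else PI).

Definition zx_phase1 (a b : 'F_2) : C := if (a == 1) && (b == 1) then - 'i else 1.

Lemma sigma_zx (a b s t : 'F_2) :
  sigma C (zx_pauli a b) s t = (s == t + a)%:R * chi C (b * s) * zx_phase1 a b.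
Proof.
by case: (F2_cases a) => ->; case: (F2_cases b) => ->;
   case: (F2_cases s) => ->; case: (F2_cases t) => ->;
   rewrite /= ?addr0 ?add0r ?mulr0 ?mul0r ?mulr1 ?mul1r /chi /zx_phase1 /=
     ?mulr1 ?mul1r ?mulr0 ?mul0r ?mulN1r ?opprK.
Qed.

Definition zx_string v w : pstring Q := fun q => zx_pauli (v q 0) (w q 0).

Definition zx_phase v w : C := \prod_q zx_phase1 (v q 0) (w q 0).

Lemma zx_phase_neq0 v w : zx_phase v w != 0.
Proof.
by apply/prodf_neq0 => q _; rewrite /zx_phase1; case: ifP;
  rewrite ?oppr_eq0 ?neq0Ci ?oner_eq0.
Qed.

Lemma prod_eq_col x y : \prod_q ((x q 0 == y q 0)%:R : C) = (x == y)%:R.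
Proof.
have [->|/col_neqP[q neq_xy]] := eqVneq x y.
  by rewrite big1 // => q _; rewrite eqxx.
by rewrite (bigD1 q) //= (negbTE neq_xy) mul0r.
Qed.

Lemma pauli_op_zx v w x y :
  pauli_op C (zx_string v w) x y = (x == y + v)%:R * chi C (dotF2 w x) * zx_phase v w.
Proof.
rewrite /pauli_op /zx_phase chi_dotE -prod_eq_col -!big_split /=.
by apply: eq_bigr => q _; rewrite sigma_zx !mxE.
Qed.

Lemma sum_shift_ind (F : qubits Q -> C) x v :
  \sum_z (x == z + v)%:R * F z = F (x + v).
Proof.
rewrite (bigD1 (x + v)) //= -addrA addrrF2 addr0 eqxx mul1r big1 ?addr0 // => z.
by rewrite eq_addF2C => /negbTE->; rewrite mul0r.
Qed.

Lemma zx_string_commute v w v' w' : dotF2 w' v = dotF2 w v' ->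
  opmul (pauli_op C (zx_string v w)) (pauli_op C (zx_string v' w'))
  = opmul (pauli_op C (zx_string v' w')) (pauli_op C (zx_string v w)).
Proof.
move=> dot_eq; apply: functional_extensionality => x.
apply: functional_extensionality => y.
have opmulE a b c d : opmul (pauli_op C (zx_string a b)) (pauli_op C (zx_string c d)) x y
    = \sum_z (x == z + a)%:R
        * (chi C (dotF2 b x) * zx_phase a b
           * ((z == y + c)%:R * chi C (dotF2 d z) * zx_phase c d)).
  by apply: eq_bigr => z _; rewrite !pauli_op_zx; ring.
rewrite !opmulE !sum_shift_ind !dotF2Dr !chiD eq_addF2A dot_eq; ring.
Qed.

(* Fourier coefficients of the diagonal [d] of an operator shifting by [v]. *)
Definition zx_coef v (d : qubits Q -> C) w : C :=
  (zx_phase v w)^-1 / (2 ^ Q)%:R * \sum_z d z * chi C (dotF2 w z).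

Lemma zx_fourier v (d : qubits Q -> C) x y :
  \sum_w zx_coef v d w * pauli_op C (zx_string v w) x y = (x == y + v)%:R * d x.
Proof.
have twoQ_neq0 : (2 ^ Q)%:R != 0 :> C by rewrite pnatr_eq0 expn_eq0.
have termE w : zx_coef v d w * pauli_op C (zx_string v w) x y
    = (x == y + v)%:R / (2 ^ Q)%:R * \sum_z d z * chi C (dotF2 w (z + x)).
  under [in RHS]eq_bigr do rewrite dotF2Dr chiD mulrA.
  rewrite -big_distrl /zx_coef pauli_op_zx /=.
  by field; rewrite twoQ_neq0 zx_phase_neq0.
under eq_bigr do rewrite termE.
rewrite -mulr_sumr exchange_big /=.
under eq_bigr do rewrite -mulr_sumr sum_chi_dot.
rewrite (bigD1 x) //= addrrF2 eqxx big1 ?addr0 => [|z z_neq_x].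
  by rewrite /= mul1r; field.
by rewrite -{1}(opprF2 x) subr_eq0 (negbTE z_neq_x) !mul0r mulr0.
Qed.

(* Strings of the other parity are replaced by the identity (with coefficient
   0), so that every group has exactly 2^Q members. *)
Definition group_string v (p : 'F_2) w : pstring Q :=
  if dotF2 w v == p then zx_string v w else zx_string 0 0.

Definition group_coef v (d : qubits Q -> C) (p : 'F_2) w : C :=
  if dotF2 w v == p then zx_coef v d w else 0.

Lemma group_string_commute v p w w' :
  opmul (pauli_op C (group_string v p w)) (pauli_op C (group_string v p w'))
  = opmul (pauli_op C (group_string v p w')) (pauli_op C (group_string v p w)).
Proof.
rewrite /group_string; case: eqP => [e|_]; case: eqP => [e'|_];
  by apply: zx_string_commute; rewrite ?e ?e' ?(dotF2C 0) ?dotF20.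
Qed.

Lemma zx_fourier_groups v (d : qubits Q -> C) x y :
  (x == y + v)%:R * d x
  = \sum_p \sum_w group_coef v d p w * pauli_op C (group_string v p w) x y.
Proof.
rewrite -zx_fourier exchange_big /=; apply: eq_bigr => w _.
rewrite (bigD1 (dotF2 w v)) //= big1 ?addr0 => [|p /negbTE p_neq].
  by rewrite /group_coef /group_string eqxx.
by rewrite /group_coef eq_sym p_neq mul0r.
Qed.

End PauliStrings.

Section ShiftOperators.
Variable C : numClosedFieldType.

Definition shifts_by k (A : op C 'cV['F_2]_k) (u : 'cV['F_2]_k) : Prop :=
  forall x y, x != y + u -> A x y = 0.

Lemma shifts_byE k (A : op C 'cV['F_2]_k) u : shifts_by A u ->
  forall x y, A x y = (x == y + u)%:R * A x (x + u).
Proof.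
move=> Au x y; have [->|/Au->] := eqVneq x (y + u); last by rewrite mul0r.
by rewrite mul1r -addrA addrrF2 addr0.
Qed.

Lemma shifts_by_ann M (j : 'I_M) : shifts_by (ann C j) (delta_mx j 0).
Proof. by move=> x y /negbTE neq; rewrite /ann neq mulr0; case: ifP. Qed.

Lemma shifts_by_cre M (j : 'I_M) : shifts_by (cre C j) (delta_mx j 0).
Proof.
by move=> x y neq; rewrite /cre /adj shifts_by_ann ?conjC0 // -eq_addF2C.
Qed.

Lemma shifts_by_opmul k (A B : op C 'cV['F_2]_k) u u' :
  shifts_by A u -> shifts_by B u' -> shifts_by (opmul A B) (u' + u).
Proof.
move=> Au Bu' x y neq; rewrite /opmul big1 // => z _.
have [xE|/Au->] := eqVneq x (z + u); last by rewrite mul0r.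
rewrite Bu' ?mulr0 //; apply: contra neq => /eqP zE.
by rewrite xE zE addrA.
Qed.

Lemma shifts_by_scale k (A : op C 'cV['F_2]_k) u (c : C) :
  shifts_by A u -> shifts_by (fun x y => c * A x y) u.
Proof. by move=> Au x y /Au->; rewrite mulr0. Qed.

Lemma shifts_by_encode M N Q (G : 'M['F_2]_(Q, M)) (A : op C (fock M)) u :
  shifts_by A u -> shifts_by (encode N G A) (G *m u).
Proof.
move=> Au x y neq; rewrite /encode big1 // => b _; rewrite big1 // => b' _.
have [b'E|/Au->] := eqVneq b' (b + u); last by rewrite mul0r.
have [xE|] := eqVneq x (G *m b'); last by rewrite mulr0.
have [yE|] := eqVneq y (G *m b); last by rewrite andbF mulr0.
by move: neq; rewrite xE yE b'E mulmxDr eqxx.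
Qed.

Lemma encode_sum M N Q (G : 'M['F_2]_(Q, M)) (I : finType)
    (F : I -> op C (fock M)) x y :
  encode N G (fun a b => \sum_i F i a b) x y = \sum_i encode N G (F i) x y.
Proof.
rewrite /encode; under eq_bigr do under eq_bigr do rewrite big_distrl.
by under eq_bigr do rewrite exchange_big; rewrite exchange_big.
Qed.

Lemma shifts_by_pauli_groups Q (A : op C (qubits Q)) v : shifts_by A v ->
  forall x y, A x y = \sum_p \sum_w
    group_coef v (fun z => A z (z + v)) p w * pauli_op C (group_string v p w) x y.
Proof.
move=> Av x y; rewrite (shifts_byE Av).
exact: (zx_fourier_groups v (fun z => A z (z + v))).
Qed.

End ShiftOperators.

Section HamiltonianTerms.
Variables (C : numClosedFieldType) (M : nat).
Variables (h : 'I_M -> 'I_M -> C) (g : 'I_M -> 'I_M -> 'I_M -> 'I_M -> C).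

Definition term := ('I_M * 'I_M + ('I_M * 'I_M) * ('I_M * 'I_M))%type.

Definition term_op (t : term) : op C (fock M) :=
  match t with
  | inl (i, j) => fun x y => h i j * opmul (cre C i) (ann C j) x y
  | inr ((i, j), (k, l)) => fun x y =>
      g i j k l * opmul (opmul (cre C i) (cre C j)) (opmul (ann C k) (ann C l)) x y
  end.

Definition term_shift (t : term) : fock M :=
  let e i : fock M := delta_mx i 0 in
  match t with
  | inl (i, j) => e j + e i
  | inr ((i, j), (k, l)) => (e l + e k) + (e j + e i)
  end.

Lemma shifts_by_term t : shifts_by (term_op t) (term_shift t).
Proof.
case: t => [[i j]|[[i j] [k l]]]; apply: shifts_by_scale.
  by apply: shifts_by_opmul; [apply: shifts_by_cre | apply: shifts_by_ann].
by apply: shifts_by_opmul; apply: shifts_by_opmul;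
  [apply: shifts_by_cre | apply: shifts_by_cre
  | apply: shifts_by_ann | apply: shifts_by_ann].
Qed.

Lemma Hop_terms : Hop h g = fun x y => \sum_(t : term) term_op t x y.
Proof.
apply: functional_extensionality => x; apply: functional_extensionality => y.
rewrite /Hop big_sumType /=; congr (_ + _).
  by rewrite pair_big /=; apply: eq_bigr => [[i j]] _.
under eq_bigr do under eq_bigr do rewrite pair_big /=.
by rewrite pair_big /= pair_big /=; apply: eq_bigr => [[[i j] [k l]]] _.
Qed.

Lemma card_term : #|{: term}| = (M ^ 2 + M ^ 4)%N.
Proof. by rewrite card_sum !card_prod card_ord !expnS expn0 !muln1 !mulnA. Qed.

End HamiltonianTerms.

Theorem theorem2 :
  exists c : nat,
  forall (C : numClosedFieldType) (M N Q : nat),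
    (0 < M)%N -> (0 < N)%N -> (0 < Q)%N -> (N <= M)%N ->
  forall G : 'M['F_2]_(Q, M),
    {in Sfix M N &, injective (fun b : fock M => G *m b)} ->
  forall (h : 'I_M -> 'I_M -> C) (g : 'I_M -> 'I_M -> 'I_M -> 'I_M -> C),
    (forall i j, h i j \is Num.real) ->
    (forall i j k l, g i j k l \is Num.real) ->
    herm_op (Hop h g) ->
  exists (K : nat) (n : 'I_K -> nat)
         (coef : forall t : 'I_K, 'I_(n t) -> C)
         (P : forall t : 'I_K, 'I_(n t) -> pstring Q),
    [/\ (K <= c * M ^ 4)%N,
        (forall (t : 'I_K) (r s : 'I_(n t)),
            opmul (pauli_op C (P t r)) (pauli_op C (P t s))
            = opmul (pauli_op C (P t s)) (pauli_op C (P t r))) &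
        (forall x y : qubits Q,
            encode N G (Hop h g) x y
            = \sum_(t : 'I_K) \sum_(r : 'I_(n t))
                 coef t r * pauli_op C (P t r) x y)].
Proof.
exists 4 => C M N Q M_gt0 _ _ _ G _ h g _ _ _.
pose E t := encode N G (term_op h g t).
pose v t := G *m term_shift t.
exists #|{: term M * 'F_2}|, (fun _ => #|{: qubits Q}|).
exists (fun t r => let: (s, p) := enum_val t in
  group_coef (v s) (fun z => E s z (z + v s)) p (enum_val r)).
exists (fun t r => let: (s, p) := enum_val t in group_string (v s) p (enum_val r)).
split.
- have : (M ^ 2 <= M ^ 4)%N by rewrite leq_pexp2l.
  by rewrite card_prod card_term card_Fp //; lia.
- by move=> t r s; case: (enum_val t) => s' p; apply: group_string_commute.
- move=> x y; rewrite Hop_terms encode_sum.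
  under eq_bigr => s _ do
    rewrite (shifts_by_pauli_groups (shifts_by_encode N (shifts_by_term h g (t := s)))).
  rewrite pair_big (reindex _ (onW_bij _ (enum_val_bij _))).
  apply: eq_bigr => t _; case: (enum_val t) => s p.
  by rewrite (reindex _ (onW_bij _ (enum_val_bij _))).
Qed.
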